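(* Let $n>2$ be an integer, $A$ an abelian group (written additively) of order $n$, and $\alpha\in A$ an element of order greater than $2$. Let $G=\{1,u,v,w\}$ be the Klein four-group with neutral element $1$. Define $\mu:G\times G\to A$ by $\mu(x,y)=\alpha$ if $(x,y)\in\{(v,w),(w,u),(w,w)\}$, $\mu(v,u)=-\alpha$, and $\mu(x,y)=0$ otherwise. Then $(G,A,\mu)$ is a non-flexible (hence nonassociative), noncommutative C-loop whose nucleus is $N=\{(1,a): a\in A\}$.
   Context: For a group $G$ and abelian group $A$, a factor set is a map $\mu:G\times G\to A$ with $\mu(1,g)=\mu(g,1)=0$; $(G,A,\mu)$ denotes $G\times A$ with multiplication $(g,a)(h,b)=(gh,\,a+b+\mu(g,h))$. A C-loop is a loop satisfying $x(y(yz))=((xy)y)z$. A loop is flexible if $(xy)x=x(yx)$ for all $x,y$. The nucleus is the set of elements $a$ with $a(yz)=(ay)z$, $y(az)=(ya)z$, $y(za)=(yz)a$ for all $y,z$. *)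

From HB Require Import structures.
From mathcomp Require Import all_boot all_order all_algebra all_fingroup.
Set Implicit Arguments. Unset Strict Implicit. Unset Printing Implicit Defensive.
Import GRing.Theory.
Local Open Scope ring_scope.

Inductive K4 := k1 | ku | kv | kw.

Definition K4mul (x y : K4) : K4 :=
  match x, y with
  | k1, z | z, k1 => z
  | ku, ku | kv, kv | kw, kw => k1
  | ku, kv | kv, ku => kw
  | ku, kw | kw, ku => kv
  | kv, kw | kw, kv => ku
  end.

Definition ext_mul (A : zmodType) (G : Type) (gmul : G -> G -> G)
  (mu : G -> G -> A) (p q : G * A) : G * A :=
  (gmul p.1 q.1, p.2 + q.2 + mu p.1 q.1).

Definition mu_alpha (A : zmodType) (alpha : A) (x y : K4) : A :=
  match x, y with
  | kv, kw | kw, ku | kw, kw => alpha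
  | kv, ku => - alpha
  | _, _ => 0
  end.

Definition is_loop (L : Type) (mul : L -> L -> L) (e : L) : Prop :=
  (forall x, mul e x = x /\ mul x e = x) /\
  (forall a b, exists! x, mul a x = b) /\
  (forall a b, exists! y, mul y a = b).

Definition C_law (L : Type) (mul : L -> L -> L) : Prop :=
  forall x y z, mul x (mul y (mul y z)) = mul (mul (mul x y) y) z.

Definition is_C_loop (L : Type) (mul : L -> L -> L) (e : L) : Prop :=
  is_loop mul e /\ C_law mul.

Definition flexible (L : Type) (mul : L -> L -> L) : Prop :=
  forall x y, mul (mul x y) x = mul x (mul y x).

Definition associative_magma (L : Type) (mul : L -> L -> L) : Prop :=
  forall x y z, mul x (mul y z) = mul (mul x y) z.

Definition commutative_magma (L : Type) (mul : L -> L -> L) : Prop :=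
  forall x y, mul x y = mul y x.

Definition in_nucleus (L : Type) (mul : L -> L -> L) (a : L) : Prop :=
  forall y z, mul a (mul y z) = mul (mul a y) z /\
              mul y (mul a z) = mul (mul y a) z /\
              mul y (mul z a) = mul (mul y z) a.

From mathcomp Require Import all_boot all_order all_algebra all_fingroup.
From mathcomp Require Import cyclic.
Set Implicit Arguments. Unset Strict Implicit. Unset Printing Implicit Defensive.
Import GRing.Theory.
Local Open Scope ring_scope.

(* Since K4 is associative, the crossed product (K4, A, mu) is associative on
   a triple (x, y, z) exactly when the coboundary
   mu(y,z) + mu(x,yz) - mu(x,y) - mu(xy,z) vanishes; since K4 also satisfies
   the C-law, so does (K4, A, mu) as soon as a three-term identity on mu holds.  For the given factor set
   all these quantities are integer multiples of alpha, checked on the 64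
   triples: the C-identity holds, whereas the coboundary is +-2 at (v,w,v),
   (v,u,v), (u,v,u) and (u,w,u).  As 2 alpha <> 0, these triples witness
   non-flexibility and keep (u,a), (v,a), (w,a) out of the nucleus, while
   (1,a) is nuclear because mu is normalized. *)

Section CrossedProduct.

Variables (A : zmodType) (G : Type) (gmul : G -> G -> G) (mu : G -> G -> A).

Local Notation L := (ext_mul gmul mu).

Lemma ext_mul_C_law :
  C_law gmul ->
  (forall x y z, mu y z + mu y (gmul y z) + mu x (gmul y (gmul y z)) =
                 mu x y + mu (gmul x y) y + mu (gmul (gmul x y) y) z) ->
  C_law L.
Proof.
move=> C_G mu_C [x a] [y b] [z c]; rewrite /ext_mul /= C_G; congr pair.
rewrite !addrA (addrAC _ (mu x y) b) (addrAC _ (mu _ y) c).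
rewrite (addrAC _ (mu x y) c).
by rewrite -!(addrA (a + b + b + c)) mu_C.
Qed.

Lemma ext_mul_assocP :
  associative_magma gmul -> forall p q r,
  L p (L q r) = L (L p q) r <->
  mu q.1 r.1 + mu p.1 (gmul q.1 r.1) = mu p.1 q.1 + mu (gmul p.1 q.1) r.1.
Proof.
move=> assoc_G [x a] [y b] [z c]; rewrite /ext_mul /= assoc_G.
set m1 := mu y z; set m2 := mu x _; set m3 := mu x y; set m4 := mu _ z.
have -> : a + (b + c + m1) + m2 = a + b + c + (m1 + m2) by rewrite !addrA.
have -> : a + b + m3 + c + m4 = a + b + c + (m3 + m4).
  by rewrite !addrA (addrAC _ m3 c).
by split=> [[/addrI] | ->].
Qed.

Variable e : G.
Hypotheses (mu_e_l : forall g, mu e g = 0) (mu_e_r : forall g, mu g e = 0).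

Lemma ext_mul_loop : is_loop gmul e -> is_loop L (e, 0).
Proof.
move=> [id_e [ldiv rdiv]]; split; [|split].
- move=> [g a]; have [eg ge] := id_e g.
  by rewrite /ext_mul /= eg ge mu_e_l mu_e_r add0r !addr0.
- move=> [a1 a2] [b1 b2]; have [x1 [ax1 x1_uniq]] := ldiv a1 b1.
  exists (x1, b2 - a2 - mu a1 x1); split.
    by rewrite /ext_mul /= ax1 addrA subrK addrC subrK.
  move=> [y1 y2] [/x1_uniq <- <-].
  by rewrite (addrAC _ _ (- a2)) addrK (addrC a2) addrK.
- move=> [a1 a2] [b1 b2]; have [x1 [x1a x1_uniq]] := rdiv a1 b1.
  exists (x1, b2 - a2 - mu x1 a1); split.
    by rewrite /ext_mul /= x1a addrAC subrK subrK.
  move=> [y1 y2] [/x1_uniq <- <-].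
  by rewrite (addrAC _ _ (- a2)) !addrK.
Qed.

Lemma ext_mul_nucleus_unit (a : A) :
  associative_magma gmul -> left_id e gmul -> right_id e gmul ->
  in_nucleus L (e, a).
Proof.
move=> assoc_G mul1g mulg1 [y b] [z c].
by split; [|split]; apply/ext_mul_assocP => //=;
  rewrite ?mul1g ?mulg1 ?mu_e_l ?mu_e_r ?add0r ?addr0.
Qed.

End CrossedProduct.

Lemma associative_flexible (T : Type) (mul : T -> T -> T) :
  associative_magma mul -> flexible mul.
Proof. by move=> assoc x y; rewrite assoc. Qed.

Lemma K4mulA : associative_magma K4mul.
Proof. by case; case; case. Qed.

Lemma K4mul1g : left_id k1 K4mul.
Proof. by case. Qed.

Lemma K4mulg1 : right_id k1 K4mul.
Proof. by case. Qed.

Lemma K4mulKg (x : K4) : cancel (K4mul x) (K4mul x).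
Proof. by case: x; case. Qed.

Lemma K4mulgK (x : K4) : cancel (K4mul^~ x) (K4mul^~ x).
Proof. by case: x; case. Qed.

Lemma K4_loop : is_loop K4mul k1.
Proof.
split; first by case.
split=> a b; [exists (K4mul a b) | exists (K4mul b a)].
  by split=> [|x <-]; rewrite K4mulKg.
by split=> [|x <-]; rewrite K4mulgK.
Qed.

Lemma K4_C_law : C_law K4mul.
Proof. by case; case; case. Qed.

Section KleinFactorSet.

Variables (A : zmodType) (alpha : A).

Local Notation mu := (mu_alpha alpha).

Definition mu_sign (x y : K4) : int :=
  match x, y with
  | kv, kw | kw, ku | kw, kw => 1
  | kv, ku => -1
  | _, _ => 0
  end.

Lemma mu_alphaE x y : mu x y = alpha *~ mu_sign x y.
Proof. by case: x; case: y; rewrite /= ?mulr0z ?mulr1z ?mulrN1z. Qed.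

Lemma mu_alpha1g g : mu k1 g = 0.
Proof. by case: g. Qed.

Lemma mu_alphag1 g : mu g k1 = 0.
Proof. by case: g. Qed.

Lemma mu_alpha_C_cocycle x y z :
  mu y z + mu y (K4mul y z) + mu x (K4mul y (K4mul y z)) =
  mu x y + mu (K4mul x y) y + mu (K4mul (K4mul x y) y) z.
Proof.
by rewrite !mu_alphaE -!mulrzDr; congr (_ *~ _); case: x; case: y; case: z.
Qed.

Definition mu_sign_coboundary (x y z : K4) : int :=
  mu_sign y z + mu_sign x (K4mul y z) - (mu_sign x y + mu_sign (K4mul x y) z).

Lemma mu_alpha_assocP x y z :
  mu y z + mu x (K4mul y z) = mu x y + mu (K4mul x y) z <->
  alpha *~ mu_sign_coboundary x y z = 0.
Proof.
rewrite /mu_sign_coboundary mulrzBr !mulrzDr -!mu_alphaE.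
by split=> [-> | /eqP]; rewrite ?subrr // subr_eq0 => /eqP.
Qed.

End KleinFactorSet.

Lemma order_gt2_mulr2_neq0 (A : finZmodType) (alpha : A) :
  (2 < #[alpha]%g)%N -> alpha *+ 2 != 0.
Proof.
apply: contraTneq => alpha2.
by rewrite -leqNgt order_inf // FinRing.zmodXgE alpha2.
Qed.

Section KleinCLoop.

Variables (A : finZmodType) (alpha : A).
Hypothesis alpha_gt2 : (2 < #[alpha]%g)%N.

Local Notation L := (ext_mul K4mul (mu_alpha alpha)).

Lemma klein_nonassoc p q r :
  mu_sign_coboundary p.1 q.1 r.1 = 2 \/ mu_sign_coboundary p.1 q.1 r.1 = -2 ->
  L p (L q r) <> L (L p q) r.
Proof.
move=> assoc_pm2 /(ext_mul_assocP _ K4mulA) /mu_alpha_assocP /eqP.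
have := order_gt2_mulr2_neq0 alpha_gt2.
by case: assoc_pm2 => ->; rewrite ?mulrNz ?oppr_eq0 => /negP.
Qed.

Lemma klein_not_flexible : ~ flexible L.
Proof.
move=> flex; apply: (@klein_nonassoc (kv, 0) (kw, 0) (kv, 0)); first by right.
by rewrite flex.
Qed.

Lemma klein_not_commutative : ~ commutative_magma L.
Proof.
move=> comm; have := comm (kv, 0) (kw, 0); rewrite /ext_mul /= !addr0 add0r.
move=> [alpha0]; move: (order_gt2_mulr2_neq0 alpha_gt2).
by rewrite alpha0 mul0rn eqxx.
Qed.

Lemma klein_nucleus_unit (g : K4) (a : A) : in_nucleus L (g, a) -> g = k1.
Proof.
case: g => // nuc; exfalso.
- by have [_ [_]] := nuc (ku, 0) (kv, 0); apply: klein_nonassoc; right.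
- by have [+ _] := nuc (ku, 0) (kv, 0); apply: klein_nonassoc; left.
- by have [_ [+ _]] := nuc (ku, 0) (ku, 0); apply: klein_nonassoc; left.
Qed.

End KleinCLoop.

Theorem proposition3p3 (n : nat) (A : finZmodType) (alpha : A) :
  (2 < n)%N -> #|A| = n -> (2 < #[alpha]%g)%N ->
  let L := ext_mul K4mul (mu_alpha alpha) in
  is_C_loop L (k1, 0) /\
  ~ flexible L /\ ~ associative_magma L /\ ~ commutative_magma L /\
  (forall p : K4 * A, in_nucleus L p <-> exists a : A, p = (k1, a)).
Proof.
move=> _ _ alpha_gt2 L.
have not_flexible := klein_not_flexible alpha_gt2.
split; [split | split; [|split; [|split]]].
- exact: ext_mul_loop (mu_alpha1g alpha) (mu_alphag1 alpha) K4_loop.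
- exact: ext_mul_C_law K4_C_law (mu_alpha_C_cocycle alpha).
- exact: not_flexible.
- by move=> /associative_flexible.
- exact: klein_not_commutative.
- move=> [g a]; split=> [/(klein_nucleus_unit alpha_gt2) -> | [b [-> ->]]].
    by exists a.
  exact: (ext_mul_nucleus_unit (mu_alpha1g alpha) (mu_alphag1 alpha) b
            K4mulA K4mul1g K4mulg1).
Qed.
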